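(* Let $D$ be a division semialgebra over $\mathbb{Z}_\mathrm{max}$ with finite unit index. Then $D\cong F^{(n)}$ for some positive integer $n$.
   Context: A (possibly noncommutative) semiring has a commutative associative addition with identity $0$ and an associative multiplication with identity $1$, satisfying both distributive laws; a division semiring is one in which every nonzero element is invertible. $\mathbb{Z}_\mathrm{max}=\mathbb{Z}\cup\{-\infty\}$ is the semifield with addition $\max$ and multiplication ordinary addition; writing $u$ for the integer $1$ in it, $\mathbb{Z}_\mathrm{max}=\{0\}\cup\{u^k:k\in\mathbb{Z}\}$. A division semialgebra over a semifield $K$ is a division semiring $D$ with an injective homomorphism from $K$ into the center of $D$. The unit index is $\mathrm{ui}(D/K)=|D^\times/K^\times|$. For a positive integer $n$, $F^{(n)}$ is the semifield $\mathbb{Z}_\mathrm{max}$ regarded as a semialgebra over $\mathbb{Z}_\mathrm{max}$ via $u^k\mapsto u^{nk}$, $0\mapsto 0$; the isomorphism is one of semialgebras over $\mathbb{Z}_\mathrm{max}$. *)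

From Stdlib Require Import ZArith List.
Unset Implicit Arguments.

(* A (possibly noncommutative) semiring, exactly as in the paper:
   commutative associative addition with identity 0, associative
   multiplication with identity 1, both distributive laws.
   (No absorbing-zero axiom is imposed, since the paper does not.) *)
Record Semiring := {
  car :> Type;
  sadd : car -> car -> car;
  smul : car -> car -> car;
  szero : car;
  sone : car;
  sadd_comm : forall x y, sadd x y = sadd y x;
  sadd_assoc : forall x y z, sadd x (sadd y z) = sadd (sadd x y) z;
  sadd_0l : forall x, sadd szero x = x;
  smul_assoc : forall x y z, smul x (smul y z) = smul (smul x y) z;
  smul_1l : forall x, smul sone x = x;
  smul_1r : forall x, smul x sone = x;
  smul_addl : forall x y z, smul (sadd x y) z = sadd (smul x z) (smul y z);
  smul_addr : forall x y z, smul x (sadd y z) = sadd (smul x y) (smul x z)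
}.

Definition is_unit (D : Semiring) (x : D) : Prop :=
  exists y : D, smul D x y = sone D /\ smul D y x = sone D.

Definition division_semiring (D : Semiring) : Prop :=
  forall x : D, x <> szero D -> is_unit D x.

(* Z_max = Z ∪ {-oo}: None is -oo (the zero), Some k is u^k. *)
Definition Zmax := option Z.
Definition zmax_add (a b : Zmax) : Zmax :=
  match a, b with
  | None, _ => b
  | _, None => a
  | Some x, Some y => Some (Z.max x y)
  end.
Definition zmax_mul (a b : Zmax) : Zmax :=
  match a, b with
  | Some x, Some y => Some (x + y)%Z
  | _, _ => None
  end.
Definition zmax_zero : Zmax := None.
Definition zmax_one : Zmax := Some 0%Z.

Definition semialgebra_structure (D : Semiring) (phi : Zmax -> D) : Prop :=
  phi zmax_zero = szero D /\
  phi zmax_one = sone D /\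
  (forall a b, phi (zmax_add a b) = sadd D (phi a) (phi b)) /\
  (forall a b, phi (zmax_mul a b) = smul D (phi a) (phi b)) /\
  (forall a b, phi a = phi b -> a = b) /\
  (forall a (d : D), smul D (phi a) d = smul D d (phi a)).

(* Finite unit index: D^x / K^x is finite, where K^x = phi(Z_max \ {0}).
   The quotient is finite iff finitely many cosets x K^x cover D^x. *)
Definition finite_unit_index (D : Semiring) (phi : Zmax -> D) : Prop :=
  exists reps : list D,
    (forall r, In r reps -> is_unit D r) /\
    forall x : D, is_unit D x ->
      exists r k, In r reps /\ x = smul D r (phi (Some k)).

(* Structure map of F^(n): u^k |-> u^(n k), 0 |-> 0. *)
Definition Fn_map (n : nat) (a : Zmax) : Zmax :=
  match a with
  | None => None
  | Some k => Some (Z.of_nat n * k)%Z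
  end.

Definition iso_to_Fn (D : Semiring) (phi : Zmax -> D) (n : nat) : Prop :=
  exists psi : D -> Zmax,
    (forall x y, psi x = psi y -> x = y) /\
    (forall z, exists x, psi x = z) /\
    psi (szero D) = zmax_zero /\
    psi (sone D) = zmax_one /\
    (forall x y, psi (sadd D x y) = zmax_add (psi x) (psi y)) /\
    (forall x y, psi (smul D x y) = zmax_mul (psi x) (psi y)) /\
    (forall a, psi (phi a) = Fn_map n a).

From Stdlib Require Import ZArith List Lia Classical ClassicalEpsilon.

(* Since [1 ⊕ 1 = u^0 ⊕ u^0 = u^0 = 1], the semiring D is idempotent and is
   partially ordered by [a <= b iff a ⊕ b = b].  Finite unit index makes some
   power [x^(m+1) = u^k] of every unit x lie in K^x; with the geometric sum
   [s = 1 ⊕ x ⊕ ... ⊕ x^m] one has [1 ⊕ s x = s ⊕ u^k], and the sign of k decides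
   whether [x <= 1] or [1 <= x].  Hence the order is total.  Each coset of K^x
   meets the interval (1, u] at most once, so this interval is finite and has a
   least element g.  Every unit lies in some [g^j, g^(j+1)), and minimality of g
   forces it to be g^j; so D^x is the infinite cyclic group generated by g,
   [u = g^n] with [n > 0], and [g^j |-> u^j] identifies D with F^(n). *)

Lemma pigeonhole_nat {A : Type} (l : list A) (g : nat -> A) :
  (forall i, In (g i) l) -> exists i j, (i < j)%nat /\ g i = g j.
Proof.
  intro Hg. apply NNPP. intro Hno.
  set (idx := seq 0 (S (length l))).
  assert (Hinj : ForallPairs (fun a b => g a = g b -> a = b) idx).
  { intros a b _ _ E.
    destruct (Nat.lt_trichotomy a b) as [H|[H|H]]; auto; exfalso; apply Hno; eauto. }
  assert (Hnd : NoDup (map g idx))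
    by exact (NoDup_map_NoDup_ForallPairs g Hinj (seq_NoDup _ _)).
  assert (Hincl : incl (map g idx) l).
  { intros a Ha. apply in_map_iff in Ha. destruct Ha as [i [<- _]]. apply Hg. }
  pose proof (NoDup_incl_length Hnd Hincl) as Hlen.
  unfold idx in Hlen. rewrite length_map, length_seq in Hlen. lia.
Qed.

Lemma Z_crossing (P : Z -> Prop) (a b : Z) :
  (a < b)%Z -> P a -> ~ P b -> exists j, P j /\ ~ P (j + 1)%Z.
Proof.
  intro Hab. replace b with (a + Z.of_nat (Z.to_nat (b - a)))%Z by lia.
  generalize (Z.to_nat (b - a)). clear b Hab. intro n. revert a.
  induction n as [|n IH]; intros a Pa Pb.
  - rewrite Z.add_0_r in Pb. contradiction.
  - destruct (classic (P (a + 1)%Z)) as [Pa1|Pa1]; [|eauto].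
    apply (IH _ Pa1). rewrite Nat2Z.inj_succ in Pb.
    replace (a + 1 + Z.of_nat n)%Z with (a + Z.succ (Z.of_nat n))%Z by lia. exact Pb.
Qed.

Lemma covered_has_min {A : Type} (le : A -> A -> Prop) :
  (forall x, le x x) -> (forall x y z, le x y -> le y z -> le x z) ->
  (forall x y, le x y \/ le y x) ->
  forall (l : list A) (P : A -> Prop),
  (forall x, P x -> In x l) -> (exists x, P x) ->
  exists m, P m /\ forall x, P x -> le m x.
Proof.
  intros Hrefl Htrans Htot l. induction l as [|a l IH]; intros P Hcov [x Px].
  { destruct (Hcov x Px). }
  destruct (classic (exists y, P y /\ y <> a)) as [Hrest|Hrest].
  - destruct (IH (fun y => P y /\ y <> a)) as [m [[Pm _] Hm]]; auto.
    { intros y [Py Hy]. destruct (Hcov y Py) as [->|]; [contradiction|assumption]. }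
    assert (Hm' : forall y, P y -> y <> a -> le m y) by (intros y Py Hy; apply Hm; split; auto).
    destruct (classic (P a)) as [Pa|Pa].
    + destruct (Htot m a) as [Hma|Ham].
      * exists m. split; auto. intros y Py.
        destruct (classic (y = a)) as [->|Hy]; auto.
      * exists a. split; auto. intros y Py.
        destruct (classic (y = a)) as [->|Hy]; eauto.
    + exists m. split; auto. intros y Py. apply Hm'; auto. intros ->. contradiction.
  - assert (Hall : forall y, P y -> y = a)
      by (intros y Py; apply NNPP; intro Hy; apply Hrest; eauto).
    exists a. rewrite <- (Hall x Px). split; auto.
    intros y Py. rewrite (Hall y Py), (Hall x Px). apply Hrefl.
Qed.

Section DivisionSemialgebra.
Variables (D : Semiring) (phi : Zmax -> D).
Hypothesis Hdiv : division_semiring D.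
Hypothesis Hphi : semialgebra_structure D phi.
Hypothesis Hfin : finite_unit_index D phi.

Local Infix "⊕" := (sadd D) (at level 50, left associativity).
Local Infix "⊗" := (smul D) (at level 40, left associativity).
Local Notation "0" := (szero D).
Local Notation "1" := (sone D).

Definition upow (k : Z) : D := phi (Some k).

Lemma phi_zero : phi None = 0.
Proof. apply Hphi. Qed.

Lemma upow0 : upow 0 = 1.
Proof. apply Hphi. Qed.

Lemma phi_add a b : phi (zmax_add a b) = phi a ⊕ phi b.
Proof. apply Hphi. Qed.

Lemma phi_mul a b : phi (zmax_mul a b) = phi a ⊗ phi b.
Proof. apply Hphi. Qed.

Lemma upowD a b : upow (a + b) = upow a ⊗ upow b.
Proof. exact (phi_mul (Some a) (Some b)). Qed.

Lemma upow_max a b : upow (Z.max a b) = upow a ⊕ upow b.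
Proof. exact (phi_add (Some a) (Some b)). Qed.

Lemma phi_inj a b : phi a = phi b -> a = b.
Proof. apply Hphi. Qed.

Lemma upow_inj a b : upow a = upow b -> a = b.
Proof. intro E. apply phi_inj in E. congruence. Qed.

Lemma phi_central a x : phi a ⊗ x = x ⊗ phi a.
Proof. apply Hphi. Qed.

Lemma upow_central k x : upow k ⊗ x = x ⊗ upow k.
Proof. apply phi_central. Qed.

Lemma one_neq_zero : 1 <> 0.
Proof. rewrite <- upow0, <- phi_zero. intro E. apply phi_inj in E. discriminate. Qed.

Lemma sadd_0r x : x ⊕ 0 = x.
Proof. rewrite sadd_comm. apply sadd_0l. Qed.

Lemma sadd_idem x : x ⊕ x = x.
Proof.
  assert (H11 : 1 ⊕ 1 = 1) by (rewrite <- upow0, <- upow_max; reflexivity).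
  rewrite <- (smul_1r D x), <- smul_addr, H11. reflexivity.
Qed.

Definition le (a b : D) : Prop := a ⊕ b = b.

Lemma le_refl a : le a a.
Proof. apply sadd_idem. Qed.

Lemma le_trans a b c : le a b -> le b c -> le a c.
Proof. unfold le. intros H1 H2. rewrite <- H2, sadd_assoc, H1. reflexivity. Qed.

Lemma le_antisym a b : le a b -> le b a -> a = b.
Proof. unfold le. intros H1 H2. rewrite <- H1, <- H2 at 1. apply sadd_comm. Qed.

Lemma le_addl a b : le a (a ⊕ b).
Proof. unfold le. rewrite sadd_assoc, sadd_idem. reflexivity. Qed.

Lemma le_addr a b : le b (a ⊕ b).
Proof. rewrite sadd_comm. apply le_addl. Qed.

Lemma le_join a b c : le a c -> le b c -> le (a ⊕ b) c.
Proof. unfold le. intros H1 H2. rewrite <- sadd_assoc, H2, H1. reflexivity. Qed.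

Lemma le_mull a b c : le a b -> le (c ⊗ a) (c ⊗ b).
Proof. unfold le. intro H. rewrite <- smul_addr, H. reflexivity. Qed.

Lemma le_mulr a b c : le a b -> le (a ⊗ c) (b ⊗ c).
Proof. unfold le. intro H. rewrite <- smul_addl, H. reflexivity. Qed.

Lemma le0x a : le 0 a.
Proof. apply sadd_0l. Qed.

Lemma le_upow a b : le (upow a) (upow b) <-> (a <= b)%Z.
Proof.
  unfold le. rewrite <- upow_max. split; intro H.
  - apply upow_inj in H. lia.
  - f_equal. lia.
Qed.

Lemma one_le_upow a : (0 <= a)%Z -> le 1 (upow a).
Proof. rewrite <- upow0. apply le_upow. Qed.

Lemma upow_le_one a : (a <= 0)%Z -> le (upow a) 1.
Proof. rewrite <- upow0. apply le_upow. Qed.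

Lemma ge1_neq0 s : le 1 s -> s <> 0.
Proof. intros H ->. unfold le in H. rewrite sadd_0r in H. exact (one_neq_zero H). Qed.

(* Absorption by 0 is not an axiom: [x ⊗ 0 <= x ⊗ (x^-1 ⊗ 0) = 0] for a unit x. *)
Lemma smul_0r x : x ⊗ 0 = 0.
Proof.
  destruct (classic (x = 0)) as [->|Hx].
  { rewrite <- phi_zero. exact (eq_sym (phi_mul None None)). }
  destruct (Hdiv x Hx) as [y [Hxy _]].
  assert (H : le (x ⊗ 0) (x ⊗ (y ⊗ 0))) by apply le_mull, le0x.
  rewrite smul_assoc, Hxy, smul_1l in H. unfold le in H. rewrite sadd_0r in H. exact H.
Qed.

Lemma smul_0l x : 0 ⊗ x = 0.
Proof. rewrite <- phi_zero, phi_central, phi_zero. apply smul_0r. Qed.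

Lemma unit_neq0 x : is_unit D x -> x <> 0.
Proof.
  intros [y [Hxy _]] ->. rewrite smul_0l in Hxy. exact (one_neq_zero (eq_sym Hxy)).
Qed.

Lemma unit_mul x y : is_unit D x -> is_unit D y -> is_unit D (x ⊗ y).
Proof.
  intros [x' [Hxx' Hx'x]] [y' [Hyy' Hy'y]]. exists (y' ⊗ x'). split.
  - rewrite <- smul_assoc, (smul_assoc D y), Hyy', smul_1l. exact Hxx'.
  - rewrite <- smul_assoc, (smul_assoc D x'), Hx'x, smul_1l. exact Hy'y.
Qed.

Lemma unit_cancel_l x a b : is_unit D x -> x ⊗ a = x ⊗ b -> a = b.
Proof.
  intros [y [_ Hyx]] E.
  rewrite <- (smul_1l D a), <- (smul_1l D b), <- Hyx, <- !smul_assoc, E. reflexivity.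
Qed.

Lemma unit_le_cancel_l x a b : is_unit D x -> le (x ⊗ a) (x ⊗ b) -> le a b.
Proof.
  intros [y [_ Hyx]] E. apply (le_mull _ _ y) in E.
  rewrite !smul_assoc, Hyx, !smul_1l in E. exact E.
Qed.

Lemma upow_unit k : is_unit D (upow k).
Proof. exists (upow (- k)). rewrite <- !upowD, <- upow0. split; f_equal; lia. Qed.

Fixpoint spow (x : D) (n : nat) : D :=
  match n with O => 1 | S n => spow x n ⊗ x end.

Lemma spowD x a b : spow x (a + b) = spow x a ⊗ spow x b.
Proof.
  induction b as [|b IH]; simpl.
  - rewrite Nat.add_0_r, smul_1r. reflexivity.
  - rewrite Nat.add_succ_r. simpl. rewrite IH, smul_assoc. reflexivity.
Qed.

Lemma spow_unit x n : is_unit D x -> is_unit D (spow x n).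
Proof.
  intro Hx. induction n as [|n IH]; simpl.
  - exists 1. rewrite smul_1l. auto.
  - apply unit_mul; assumption.
Qed.

Lemma one_le_spow x n : le 1 x -> le 1 (spow x n).
Proof.
  intro Hx. induction n as [|n IH]; simpl; [apply le_refl|].
  apply le_trans with (spow x n); auto.
  rewrite <- (smul_1r D (spow x n)) at 1. apply le_mull, Hx.
Qed.

Lemma spow_le_one x n : le x 1 -> le (spow x n) 1.
Proof.
  intro Hx. induction n as [|n IH]; simpl; [apply le_refl|].
  apply le_trans with (spow x n); auto.
  rewrite <- (smul_1r D (spow x n)) at 2. apply le_mull, Hx.
Qed.

Lemma unit_spow_in_K x : is_unit D x -> exists m k, spow x (S m) = upow k.
Proof.
  intro Hx. destruct Hfin as [reps [_ Hreps]].
  assert (Hcoset : forall i, exists r, In r reps /\ exists k, spow x i = r ⊗ upow k).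
  { intro i. destruct (Hreps _ (spow_unit x i Hx)) as [r [k [Hr E]]]. eauto. }
  set (rep := fun i => proj1_sig (constructive_indefinite_description _ (Hcoset i))).
  assert (Hrep : forall i, In (rep i) reps /\ exists k, spow x i = rep i ⊗ upow k)
    by (intro i; exact (proj2_sig (constructive_indefinite_description _ (Hcoset i)))).
  destruct (pigeonhole_nat reps rep (fun i => proj1 (Hrep i))) as [i [j [Hij E]]].
  destruct (proj2 (Hrep i)) as [a Ha]. destruct (proj2 (Hrep j)) as [b Hb].
  exists (j - i - 1)%nat, (b - a)%Z.
  apply (unit_cancel_l (spow x i)); [apply spow_unit, Hx|].
  rewrite <- spowD. replace (i + S (j - i - 1))%nat with j by lia.
  rewrite Hb, Ha, <- E, <- smul_assoc, <- upowD. do 2 f_equal. lia.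
Qed.

Fixpoint geom (x : D) (n : nat) : D :=
  match n with O => 1 | S n => geom x n ⊕ spow x (S n) end.

Lemma geom_succ_l x n : geom x (S n) = 1 ⊕ geom x n ⊗ x.
Proof.
  induction n as [|n IH]; [reflexivity|].
  change (geom x (S n) ⊕ spow x (S n) ⊗ x = 1 ⊕ (geom x n ⊕ spow x (S n)) ⊗ x).
  rewrite IH, smul_addl, sadd_assoc. reflexivity.
Qed.

Lemma one_le_geom x n : le 1 (geom x n).
Proof.
  induction n as [|n IH]; simpl; [apply le_refl|].
  apply le_trans with (geom x n); [exact IH|apply le_addl].
Qed.

Lemma spow_le_geom x n : le (spow x n) (geom x n).
Proof. destruct n; simpl; [apply le_refl|apply le_addr]. Qed.

Lemma unit_comparable_1 x : is_unit D x -> le x 1 \/ le 1 x.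
Proof.
  intro Hx. destruct (unit_spow_in_K x Hx) as [n [k Hk]].
  set (s := geom x n).
  assert (Hs1 : le 1 s) by apply one_le_geom.
  assert (Hs : is_unit D s) by exact (Hdiv s (ge1_neq0 s Hs1)).
  assert (Hshift : 1 ⊕ s ⊗ x = s ⊕ upow k)
    by (rewrite <- Hk; exact (eq_sym (geom_succ_l x n))).
  assert (Hk_le : le (upow k) (s ⊗ x))
    by (rewrite <- Hk; apply le_mulr, spow_le_geom).
  destruct (Z_le_gt_dec 0 k) as [Hk0|Hk0]; [right|left];
    apply (unit_le_cancel_l s); auto; rewrite smul_1r;
    apply le_trans with (1 ⊕ s ⊗ x).
  - rewrite Hshift. apply le_addl.
  - apply le_join; [|apply le_refl].
    apply le_trans with (upow k); [apply one_le_upow; lia|exact Hk_le].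
  - apply le_addr.
  - rewrite Hshift. apply le_join; [apply le_refl|].
    apply le_trans with 1; [apply upow_le_one; lia|exact Hs1].
Qed.

Lemma le_total a b : le a b \/ le b a.
Proof.
  destruct (classic (a = 0)) as [->|Ha]; [left; apply le0x|].
  destruct (classic (b = 0)) as [->|Hb]; [right; apply le0x|].
  destruct (Hdiv a Ha) as [a' [Haa' Ha'a]].
  assert (Hu : is_unit D (a' ⊗ b))
    by (apply unit_mul; [exists a; auto|apply Hdiv, Hb]).
  destruct (unit_comparable_1 _ Hu) as [H|H]; [right|left];
    apply (le_mull _ _ a) in H; rewrite smul_assoc, Haa', smul_1l, smul_1r in H; exact H.
Qed.

Lemma unit_bounds x :
  is_unit D x -> exists c, (0 <= c)%Z /\ le (upow (- c)) x /\ le x (upow c).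
Proof.
  intro Hx. destruct (unit_spow_in_K x Hx) as [m [k Hk]]. simpl in Hk.
  destruct (unit_comparable_1 x Hx) as [H|H].
  - assert (Hkx : le (upow k) x).
    { rewrite <- Hk. apply le_trans with (1 ⊗ x).
      - apply le_mulr, spow_le_one, H.
      - rewrite smul_1l. apply le_refl. }
    assert (Hk0 : (k <= 0)%Z)
      by (apply le_upow; rewrite upow0; exact (le_trans _ _ _ Hkx H)).
    exists (- k)%Z. rewrite Z.opp_involutive. repeat split; [lia|exact Hkx|].
    apply le_trans with 1; [exact H|apply one_le_upow; lia].
  - assert (Hxk : le x (upow k)).
    { rewrite <- Hk. apply le_trans with (1 ⊗ x).
      - rewrite smul_1l. apply le_refl.
      - apply le_mulr, one_le_spow, H. }
    assert (Hk0 : (0 <= k)%Z)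
      by (apply le_upow; rewrite upow0; exact (le_trans _ _ _ H Hxk)).
    exists k. repeat split; [lia| |exact Hxk].
    apply le_trans with 1; [apply upow_le_one; lia|exact H].
Qed.

Lemma Zhom_scale (f h : Z -> D) (a b : Z) :
  f 0%Z = 1 -> h 0%Z = 1 ->
  (forall i j, f (i + j)%Z = f i ⊗ f j) -> (forall i j, h (i + j)%Z = h i ⊗ h j) ->
  f a = h b -> forall c, f (a * c)%Z = h (b * c)%Z.
Proof.
  intros Hf0 Hh0 Hf Hh Hab.
  assert (Hopp : f (- a)%Z = h (- b)%Z).
  { rewrite <- (smul_1r D (f (- a)%Z)), <- Hh0, <- (Z.add_opp_diag_r b), Hh,
      smul_assoc, <- Hab, <- Hf, Z.add_opp_diag_l, Hf0, smul_1l. reflexivity. }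
  intro c. induction c as [|c IH|c IH] using Z.peano_ind.
  - rewrite !Z.mul_0_r, Hf0, Hh0. reflexivity.
  - rewrite !Z.mul_succ_r, Hf, Hh, IH, Hab. reflexivity.
  - rewrite !Z.mul_pred_r.
    rewrite <- !Z.add_opp_r, Hf, Hh, IH, Hopp. reflexivity.
Qed.

Definition in_Ioc_1_u (x : D) : Prop :=
  is_unit D x /\ le 1 x /\ x <> 1 /\ le x (upow 1).

Lemma Ioc_1_u_coset_unique x y r a b :
  in_Ioc_1_u x -> in_Ioc_1_u y -> x = r ⊗ upow a -> y = r ⊗ upow b -> x = y.
Proof.
  (* If [y = x u^c] with [c >= 1], then [u <= x u <= y <= u] forces [x u = u], i.e. [x = 1]. *)
  assert (Hshift : forall x y c, in_Ioc_1_u x -> in_Ioc_1_u y -> (1 <= c)%Z ->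
                     y <> x ⊗ upow c).
  { intros x' y' c [_ [Hx1 [Hxne _]]] [_ [_ [_ Hyu]]] Hc E.
    assert (Hxu : le (upow 1) (x' ⊗ upow 1))
      by (rewrite <- (smul_1l D (upow 1)) at 1; apply le_mulr, Hx1).
    assert (Hxuy : le (x' ⊗ upow 1) y') by (rewrite E; apply le_mull, le_upow; lia).
    apply Hxne, (unit_cancel_l (upow 1)); [apply upow_unit|].
    rewrite smul_1r, upow_central. apply le_antisym; eauto using le_trans. }
  intros Hx Hy Ha Hb.
  destruct (Z.lt_trichotomy a b) as [Hab|[<-|Hab]]; [exfalso| congruence|exfalso].
  - apply (Hshift x y (b - a)%Z Hx Hy); [lia|].
    rewrite Hb, Ha, <- smul_assoc, <- upowD. do 2 f_equal. lia.
  - apply (Hshift y x (a - b)%Z Hy Hx); [lia|].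
    rewrite Hb, Ha, <- smul_assoc, <- upowD. do 2 f_equal. lia.
Qed.

Lemma Ioc_1_u_finite : exists l, forall x, in_Ioc_1_u x -> In x l.
Proof.
  destruct Hfin as [reps [_ Hreps]].
  set (pick := fun r => epsilon (inhabits 1)
                 (fun x => in_Ioc_1_u x /\ exists k, x = r ⊗ upow k)).
  exists (map pick reps). intros x Hx.
  destruct (Hreps x (proj1 Hx)) as [r [k [Hr Hxr]]].
  apply in_map_iff. exists r. split; [|exact Hr].
  destruct (epsilon_spec (inhabits 1) (fun x => in_Ioc_1_u x /\ exists k, x = r ⊗ upow k))
    as [Hp [k' Hk']]; [eauto|].
  exact (Ioc_1_u_coset_unique _ _ r k' k Hp Hx Hk' Hxr).
Qed.

Lemma Ioc_1_u_has_min : exists g, in_Ioc_1_u g /\ forall x, in_Ioc_1_u x -> le g x.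
Proof.
  destruct Ioc_1_u_finite as [l Hl].
  apply (covered_has_min le le_refl le_trans le_total l); [exact Hl|].
  exists (upow 1). repeat split.
  - apply upow_unit.
  - apply one_le_upow. lia.
  - rewrite <- upow0. intro E. apply upow_inj in E. discriminate.
  - apply le_refl.
Qed.

Section IntegerPowers.
Variables g g' : D.
Hypothesis Hgg' : g ⊗ g' = 1.
Hypothesis Hg'g : g' ⊗ g = 1.

Definition zpow (j : Z) : D := spow g (Z.to_nat j) ⊗ spow g' (Z.to_nat (- j)).

Lemma zpow0 : zpow 0 = 1.
Proof. apply smul_1l. Qed.

Lemma zpow_succ j : zpow (j + 1) = zpow j ⊗ g.
Proof.
  unfold zpow. destruct (Z_le_gt_dec 0 j).
  - replace (Z.to_nat (j + 1)) with (S (Z.to_nat j)) by lia.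
    replace (Z.to_nat (- (j + 1))) with O by lia.
    replace (Z.to_nat (- j)) with O by lia. simpl. rewrite !smul_1r. reflexivity.
  - replace (Z.to_nat (j + 1)) with O by lia.
    replace (Z.to_nat j) with O by lia.
    replace (Z.to_nat (- j)) with (S (Z.to_nat (- (j + 1)))) by lia. simpl.
    rewrite <- !smul_assoc, Hg'g, smul_1r. reflexivity.
Qed.

Lemma zpow_pred j : zpow (j - 1) = zpow j ⊗ g'.
Proof.
  replace j with ((j - 1) + 1)%Z at 2 by lia.
  rewrite zpow_succ, <- smul_assoc, Hgg', smul_1r. reflexivity.
Qed.

Lemma zpowD i j : zpow (i + j) = zpow i ⊗ zpow j.
Proof.
  induction j as [|j IH|j IH] using Z.peano_ind.
  - rewrite Z.add_0_r, zpow0, smul_1r. reflexivity.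
  - rewrite <- Z.add_1_r, Z.add_assoc, !zpow_succ, IH, smul_assoc. reflexivity.
  - rewrite <- Z.sub_1_r, Z.add_sub_assoc, !zpow_pred, IH, smul_assoc. reflexivity.
Qed.

Lemma zpow1 : zpow 1 = g.
Proof. change 1%Z with (0 + 1)%Z. rewrite zpow_succ, zpow0, smul_1l. reflexivity. Qed.

Lemma zpow_unit j : is_unit D (zpow j).
Proof. exists (zpow (- j)). rewrite <- !zpowD, <- zpow0. split; f_equal; lia. Qed.

Lemma zpow_of_nat n : zpow (Z.of_nat n) = spow g n.
Proof.
  unfold zpow. rewrite Nat2Z.id. replace (Z.to_nat (- Z.of_nat n)) with O by lia.
  apply smul_1r.
Qed.

Hypothesis Hg1 : le 1 g.
Hypothesis Hgne1 : g <> 1.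

Lemma zpow_mono i j : (i <= j)%Z -> le (zpow i) (zpow j).
Proof.
  intro Hij. replace j with (i + Z.of_nat (Z.to_nat (j - i)))%Z by lia.
  rewrite zpowD, zpow_of_nat, <- (smul_1r D (zpow i)) at 1.
  apply le_mull, one_le_spow, Hg1.
Qed.

Lemma zpow_inj i j : zpow i = zpow j -> i = j.
Proof.
  (* [zpow (j - i) = 1] with [j > i] would squeeze g between 1 and 1. *)
  assert (Hpos : forall i j, (i < j)%Z -> zpow i = zpow j -> False).
  { intros i' j' Hij E. apply Hgne1, le_antisym; [|exact Hg1].
    assert (E1 : zpow (j' - i') = 1).
    { apply (unit_cancel_l (zpow i')); [apply zpow_unit|].
      rewrite <- zpowD, smul_1r, E. f_equal. lia. }
    rewrite <- E1, <- zpow1. apply zpow_mono. lia. }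
  intro E. destruct (Z.lt_trichotomy i j) as [H|[H|H]]; [exfalso|exact H|exfalso]; eauto.
Qed.

Lemma zpow_max i j : zpow i ⊕ zpow j = zpow (Z.max i j).
Proof.
  destruct (Z.le_ge_cases i j) as [H|H].
  - rewrite Z.max_r by exact H. apply zpow_mono, H.
  - rewrite Z.max_l by exact H. rewrite sadd_comm. apply zpow_mono, H.
Qed.

Lemma zpow_succ_not_le j : ~ le (zpow (j + 1)) (zpow j).
Proof.
  intro H. assert (E : zpow (j + 1) = zpow j) by (apply le_antisym; [exact H|apply zpow_mono; lia]).
  apply zpow_inj in E. lia.
Qed.

Lemma zpow_eq_upow : exists M k, (0 < M)%Z /\ (0 < k)%Z /\ zpow M = upow k.
Proof.
  destruct (unit_spow_in_K g) as [m [k Hk]]; [exists g'; split; assumption|].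
  exists (Z.of_nat (S m)), k. rewrite zpow_of_nat. split; [lia|split; [|exact Hk]].
  assert (H1k : le 1 (upow k)) by (rewrite <- Hk; apply one_le_spow, Hg1).
  rewrite <- upow0 in H1k. apply le_upow in H1k.
  destruct (Z.eq_dec k 0) as [->|]; [|lia].
  rewrite upow0, <- zpow0, <- zpow_of_nat in Hk. apply zpow_inj in Hk. lia.
Qed.

Lemma unit_zpow_bracket x :
  is_unit D x -> exists j, le (zpow j) x /\ le x (zpow (j + 1)) /\ x <> zpow (j + 1).
Proof.
  intro Hx. destruct (unit_bounds x Hx) as [c [Hc [Hlo Hhi]]].
  destruct zpow_eq_upow as [M [k [HM [Hk HMk]]]].
  pose proof (Zhom_scale zpow upow M k zpow0 upow0 zpowD upowD HMk) as Hscale.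
  destruct (Z_crossing (fun j => le (zpow j) x) (M * - c) (M * c + 1)) as [j [Pj NPj]].
  - nia.
  - rewrite Hscale. apply le_trans with (upow (- c)); [apply le_upow; nia|exact Hlo].
  - intro H. apply (zpow_succ_not_le (M * c)). apply le_trans with x; [exact H|].
    rewrite Hscale. apply le_trans with (upow c); [exact Hhi|apply le_upow; nia].
  - exists j. split; [exact Pj|].
    destruct (le_total x (zpow (j + 1))) as [H|H]; [|contradiction].
    split; [exact H|]. intros ->. apply NPj, le_refl.
Qed.

Hypothesis Hgu : le g (upow 1).
Hypothesis Hgmin : forall x, in_Ioc_1_u x -> le g x.

Lemma zpow_surj x : x <> 0 -> exists j, x = zpow j.
Proof.
  intro Hx0. destruct (unit_zpow_bracket x (Hdiv x Hx0)) as [j [Hlo [Hhi Hne]]].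
  exists j. set (y := zpow (- j) ⊗ x).
  assert (Ey : x = zpow j ⊗ y)
    by (unfold y; rewrite smul_assoc, <- zpowD, Z.add_opp_diag_r, zpow0, smul_1l; reflexivity).
  assert (Hstep : zpow (j + 1) = zpow j ⊗ g) by (rewrite zpowD, zpow1; reflexivity).
  assert (Hy1 : le 1 y)
    by (apply (unit_le_cancel_l (zpow j)); [apply zpow_unit|rewrite smul_1r, <- Ey; exact Hlo]).
  assert (Hyg : le y g)
    by (apply (unit_le_cancel_l (zpow j)); [apply zpow_unit|rewrite <- Ey, <- Hstep; exact Hhi]).
  destruct (classic (y = 1)) as [E|E]; [rewrite Ey, E, smul_1r; reflexivity|].
  exfalso. apply Hne. rewrite Hstep, Ey. f_equal. apply le_antisym; [exact Hyg|].
  apply Hgmin. repeat split; eauto using le_trans.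
  apply unit_mul; [apply zpow_unit|exact (Hdiv x Hx0)].
Qed.

Lemma upow_eq_zpow : exists n, (0 < n)%Z /\ forall k, upow k = zpow (n * k).
Proof.
  destruct (zpow_surj (upow 1) (unit_neq0 _ (upow_unit 1))) as [n Hn].
  exists n. split.
  - destruct (Z_lt_le_dec 0 n) as [H|H]; [exact H|exfalso].
    assert (Hu1 : le (upow 1) (upow 0)) by (rewrite Hn, upow0, <- zpow0; apply zpow_mono, H).
    apply le_upow in Hu1. lia.
  - intro k. rewrite <- (Z.mul_1_l k) at 1.
    exact (Zhom_scale upow zpow 1 n upow0 zpow0 upowD zpowD Hn k).
Qed.

Lemma iso_of_zpow (n : Z) :
  (0 < n)%Z -> (forall k, upow k = zpow (n * k)) -> iso_to_Fn D phi (Z.to_nat n).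
Proof.
  intros Hn Hu.
  set (psi := fun x => if excluded_middle_informative (x = 0) then None
                       else Some (epsilon (inhabits 0%Z) (fun j => x = zpow j))).
  assert (psi0 : psi 0 = None).
  { unfold psi. destruct (excluded_middle_informative _); congruence. }
  assert (psi_zpow : forall j, psi (zpow j) = Some j).
  { intro j. unfold psi. destruct (excluded_middle_informative _) as [H|H].
    - exfalso. exact (unit_neq0 _ (zpow_unit j) H).
    - f_equal. symmetry. apply zpow_inj.
      apply (epsilon_spec (inhabits 0%Z) (fun i => zpow j = zpow i)). eauto. }
  assert (Hcases : forall x, x = 0 \/ exists j, x = zpow j).
  { intro x. destruct (classic (x = 0)); [left|right; apply zpow_surj]; assumption. }
  exists psi. split; [|split; [|split; [|split; [|split; [|split]]]]].
  - intros x y E. destruct (Hcases x) as [->|[i ->]], (Hcases y) as [->|[j ->]];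
      rewrite ?psi0, ?psi_zpow in E; congruence.
  - intros [j|]; [exists (zpow j)|exists 0]; auto.
  - exact psi0.
  - rewrite <- zpow0. apply psi_zpow.
  - intros x y. destruct (Hcases x) as [->|[i ->]], (Hcases y) as [->|[j ->]].
    + rewrite sadd_0l, psi0. reflexivity.
    + rewrite sadd_0l, psi0. reflexivity.
    + rewrite sadd_0r, psi0, psi_zpow. reflexivity.
    + rewrite zpow_max, !psi_zpow. reflexivity.
  - intros x y. destruct (Hcases x) as [->|[i ->]], (Hcases y) as [->|[j ->]].
    + rewrite smul_0l, psi0. reflexivity.
    + rewrite smul_0l, psi0. reflexivity.
    + rewrite smul_0r, psi0, psi_zpow. reflexivity.
    + rewrite <- zpowD, !psi_zpow. reflexivity.
  - intros [k|].
    + change (psi (upow k) = Some (Z.of_nat (Z.to_nat n) * k)%Z).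
      rewrite Hu, psi_zpow, Z2Nat.id by lia. reflexivity.
    + rewrite phi_zero, psi0. reflexivity.
Qed.

End IntegerPowers.

End DivisionSemialgebra.

Theorem mainTheorem18 (D : Semiring) (phi : Zmax -> D) :
  division_semiring D ->
  semialgebra_structure D phi ->
  finite_unit_index D phi ->
  exists n : nat, (0 < n)%nat /\ iso_to_Fn D phi n.
Proof.
  intros Hdiv Hphi Hfin.
  destruct (Ioc_1_u_has_min D phi Hdiv Hphi Hfin)
    as [g [[[g' [Hgg' Hg'g]] [Hg1 [Hgne1 Hgu]]] Hgmin]].
  destruct (upow_eq_zpow D phi Hdiv Hphi Hfin g g' Hgg' Hg'g Hg1 Hgne1 Hgu Hgmin)
    as [n [Hn Hu]].
  exists (Z.to_nat n). split; [lia|].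
  exact (iso_of_zpow D phi Hdiv Hphi Hfin g g' Hgg' Hg'g Hg1 Hgne1 Hgu Hgmin n Hn Hu).
Qed.
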